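(* Let $\langle \mathbf{A},\{N_x\}_{x\in A}\rangle$ be a complete $C_\omega$-structure whose underlying algebra $\mathbf{A}$ is refinable, and suppose $\mathbf{V}^{\langle \mathbf{A},N\rangle}$ is a Leibniz model. If $\mathbf{V}^{\langle \mathbf{A},N\rangle}\vDash\exists x\,\psi(x)$ for a formula $\psi(x)$ of $\mathcal{L}_{\langle \mathbf{A},N\rangle}$, then there is $u\in\mathbf{V}^{\langle \mathbf{A},N\rangle}$ such that $\mathbf{V}^{\langle \mathbf{A},N\rangle}\vDash\psi(u)$.
   Context: A generalized Heyting algebra is a distributive lattice $\langle B,\vee,\wedge,1\rangle$ with greatest element $1$ and a binary operation $\to$ such that $a\to b$ is the greatest $c$ with $a\wedge c\le b$. A $C_\omega$-structure is a pair $\langle \mathbf{A},\{N_x\}_{x\in A}\rangle$ where $\mathbf{A}$ is a generalized Heyting algebra and each $N_x\subseteq A$, such that (i) for every $x\in A$ there is $x'\in N_x$ with $x\vee x'=1$, and (ii) for every $x'\in N_x$ there is $x''\in N_{x'}$ with $x''\le x$. It is complete if $\mathbf{A}$ is a complete lattice (then $\mathbf{A}$ is a complete Heyting algebra with least element $0$). A set $B$ refines a set $C$ if every $b\in B$ is below some $c\in C$; the algebra $\mathbf{A}$ is refinable if for every $C\subseteq A$ there is an antichain $B\subseteq A$ refining $C$ with $\bigvee B=\bigvee C$. Fix a model $\mathbf{V}$ of set theory (with the Axiom of Choice). By transfinite recursion let $\mathbf{V}^{\langle \mathbf{A},N\rangle}_\xi$ be the set of all functions $x$ with $\mathrm{ran}(x)\subseteq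 A$ and $\mathrm{dom}(x)\subseteq\mathbf{V}^{\langle \mathbf{A},N\rangle}_\zeta$ for some $\zeta<\xi$, and $\mathbf{V}^{\langle \mathbf{A},N\rangle}=\bigcup_\xi\mathbf{V}^{\langle \mathbf{A},N\rangle}_\xi$. The language $\mathcal{L}_{\langle \mathbf{A},N\rangle}$ is first-order with connectives $\wedge,\vee,\to,\neg$, quantifiers, binary predicates $\in,\approx$, and a constant for each element of $\mathbf{V}^{\langle \mathbf{A},N\rangle}$. The model comes with a truth-value map $\|\cdot\|$ from sentences to $A$ satisfying: $\|u\in v\|=\bigvee_{x\in\mathrm{dom}(v)}(v(x)\wedge\|x\approx u\|)$; $\|u\approx v\|=\bigwedge_{x\in\mathrm{dom}(u)}(u(x)\to\|x\in v\|)\wedge\bigwedge_{x\in\mathrm{dom}(v)}(v(x)\to\|x\in u\|)$; $\|\varphi\#\psi\|=\|\varphi\|\#\|\psi\|$ for $\#\in\{\wedge,\vee,\to\}$; $\|\neg\alpha\|\in N_{\|\alpha\|}$ and $\|\neg\neg\alpha\|\le\|\alpha\|$; $\|\exists x\varphi\|=\bigvee_{u\in\mathbf{V}^{\langle \mathbf{A},N\rangle}}\|\varphi(u)\|$, $\|\forall x\varphi\|=\bigwedge_{u\in\mathbf{V}^{\langle \mathbf{A},N\rangle}}\|\varphi(u)\|$. A sentence $\varphi$ is valid, $\mathbf{V}^{\langle \mathbf{A},N\rangle}\vDash\varphi$, if $\|\varphi\|=1$. The model is a Leibniz model if for every formula $\varphi(x)$ and all $u,v\in\mathbf{V}^{\langle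 \mathbf{A},N\rangle}$, $\|u\approx v\|\wedge\|\varphi(u)\|\le\|\varphi(v)\|$. *)

From Stdlib Require Import PeanoNat.

(* Distributivity follows from the Heyting
   adjunction. *)
Record CHA := {
  car :> Type;
  le : car -> car -> Prop;
  le_refl : forall a, le a a;
  le_trans : forall a b c, le a b -> le b c -> le a c;
  le_antisym : forall a b, le a b -> le b a -> a = b;
  meet : car -> car -> car;
  join : car -> car -> car;
  imp : car -> car -> car;
  top : car;
  bot : car;
  sup : (car -> Prop) -> car;
  inf : (car -> Prop) -> car;
  meet_glb : forall a b c, le c (meet a b) <-> (le c a /\ le c b);
  join_lub : forall a b c, le (join a b) c <-> (le a c /\ le b c);
  top_max : forall a, le a top;
  bot_min : forall a, le bot a;
  imp_adj : forall a b c, le c (imp a b) <-> le (meet a c) b;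
  sup_lub : forall (S : car -> Prop) c, le (sup S) c <-> (forall a, S a -> le a c);
  inf_glb : forall (S : car -> Prop) c, le c (inf S) <-> (forall a, S a -> le c a)
}.

Arguments le {_} _ _.
Arguments meet {_} _ _.
Arguments join {_} _ _.
Arguments imp {_} _ _.
Arguments top {_}.
Arguments bot {_}.
Arguments sup {_} _.
Arguments inf {_} _.

(* [N x y] means y \in N_x. *)
Definition C_omega (A : CHA) (N : A -> A -> Prop) : Prop :=
  (forall x : A, exists x', N x x' /\ join x x' = top) /\
  (forall x x' : A, N x x' -> exists x'', N x' x'' /\ le x'' x).

Definition refines {A : CHA} (B C : A -> Prop) : Prop :=
  forall b, B b -> exists c, C c /\ le b c.

Definition antichain {A : CHA} (B : A -> Prop) : Prop :=
  forall b c, B b -> B c -> b <> c -> meet b c = bot.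

Definition refinable (A : CHA) : Prop :=
  forall C : A -> Prop, exists B : A -> Prop,
    antichain B /\ refines B C /\ sup B = sup C.

(* A name is a family indexed by a set I: a domain listing [dom i] of names,
   each with value [val i] in A. *)
Inductive name (T : Type) : Type :=
  Nm : forall I : Type, (I -> name T) -> (I -> T) -> name T.
Arguments Nm {T} I _ _.

Definition ndomI {T} (u : name T) : Type := match u with Nm J _ _ => J end.
Definition ndom {T} (u : name T) : ndomI u -> name T :=
  match u return ndomI u -> name T with Nm _ d _ => d end.
Definition nval {T} (u : name T) : ndomI u -> T :=
  match u return ndomI u -> T with Nm _ _ f => f end.

Inductive term (T : Type) : Type :=
  | Var : nat -> term T
  | Cst : name T -> term T.
Arguments Var {T} _.
Arguments Cst {T} _.

Inductive form (T : Type) : Type :=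
  | FMem : term T -> term T -> form T
  | FEq  : term T -> term T -> form T
  | FAnd : form T -> form T -> form T
  | FOr  : form T -> form T -> form T
  | FImp : form T -> form T -> form T
  | FNeg : form T -> form T
  | FEx  : nat -> form T -> form T
  | FAll : nat -> form T -> form T.
Arguments FMem {T} _ _.
Arguments FEq {T} _ _.
Arguments FAnd {T} _ _.
Arguments FOr {T} _ _.
Arguments FImp {T} _ _.
Arguments FNeg {T} _.
Arguments FEx {T} _ _.
Arguments FAll {T} _ _.

Definition tfree {T} (n : nat) (t : term T) : Prop :=
  match t with Var m => m = n | Cst _ => False end.

Fixpoint free {T} (n : nat) (f : form T) : Prop :=
  match f with
  | FMem s t | FEq s t => tfree n s \/ tfree n t
  | FAnd f g | FOr f g | FImp f g => free n f \/ free n g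
  | FNeg f => free n f
  | FEx m f | FAll m f => m <> n /\ free n f
  end.

Definition sentence {T} (f : form T) : Prop := forall n, ~ free n f.

Definition tsubst {T} (x : nat) (u : name T) (t : term T) : term T :=
  match t with Var m => if Nat.eqb m x then Cst u else t | Cst _ => t end.

Fixpoint subst {T} (x : nat) (u : name T) (f : form T) : form T :=
  match f with
  | FMem s t => FMem (tsubst x u s) (tsubst x u t)
  | FEq s t => FEq (tsubst x u s) (tsubst x u t)
  | FAnd f g => FAnd (subst x u f) (subst x u g)
  | FOr f g => FOr (subst x u f) (subst x u g)
  | FImp f g => FImp (subst x u f) (subst x u g)
  | FNeg f => FNeg (subst x u f)
  | FEx m f => if Nat.eqb m x then FEx m f else FEx m (subst x u f)
  | FAll m f => if Nat.eqb m x then FAll m f else FAll m (subst x u f)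
  end.

Definition truth_map (A : CHA) (N : A -> A -> Prop) (V : form A -> A) : Prop :=
  (forall u v : name A,
     V (FMem (Cst u) (Cst v)) =
     sup (fun a => exists i : ndomI v,
              a = meet (nval v i) (V (FEq (Cst (ndom v i)) (Cst u))))) /\
  (forall u v : name A,
     V (FEq (Cst u) (Cst v)) =
     meet (inf (fun a => exists i : ndomI u,
                   a = imp (nval u i) (V (FMem (Cst (ndom u i)) (Cst v)))))
          (inf (fun a => exists i : ndomI v,
                   a = imp (nval v i) (V (FMem (Cst (ndom v i)) (Cst u)))))) /\
  (forall f g, sentence f -> sentence g -> V (FAnd f g) = meet (V f) (V g)) /\
  (forall f g, sentence f -> sentence g -> V (FOr f g) = join (V f) (V g)) /\
  (forall f g, sentence f -> sentence g -> V (FImp f g) = imp (V f) (V g)) /\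
  (forall f, sentence f -> N (V f) (V (FNeg f)) /\ le (V (FNeg (FNeg f))) (V f)) /\
  (forall x f, sentence (FEx x f) ->
     V (FEx x f) = sup (fun a => exists u : name A, a = V (subst x u f))) /\
  (forall x f, sentence (FAll x f) ->
     V (FAll x f) = inf (fun a => exists u : name A, a = V (subst x u f))).

Definition one_var {T} (x : nat) (f : form T) : Prop :=
  forall n, free n f -> n = x.

Definition valid {A : CHA} (V : form A -> A) (f : form A) : Prop := V f = top.

Definition Leibniz (A : CHA) (V : form A -> A) : Prop :=
  forall (x : nat) (f : form A), one_var x f ->
  forall u v : name A,
    le (meet (V (FEq (Cst u) (Cst v))) (V (subst x u f))) (V (subst x v f)).

From Stdlib Require Import Classical ClassicalEpsilon.

(* Refine the family of truth values ||psi(u)|| to an antichain B with the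
   same join 1, pick for each b in B a name u_b with b <= ||psi(u_b)||, and
   glue the u_b into one name w whose elements are those of u_b weighted by b.
   Disjointness of B gives b <= ||u_b = w||, so by the Leibniz property
   b <= ||psi(w)|| for every b in B, whence ||psi(w)|| >= sup B = 1. *)

Section CHAFacts.
Variable A : CHA.

Lemma le_meetl (a b : A) : le (meet a b) a.
Proof. exact (proj1 (proj1 (meet_glb A a b _) (le_refl A _))). Qed.

Lemma le_meetr (a b : A) : le (meet a b) b.
Proof. exact (proj2 (proj1 (meet_glb A a b _) (le_refl A _))). Qed.

Lemma le_meet (a b c : A) : le c a -> le c b -> le c (meet a b).
Proof. intros Hca Hcb. apply meet_glb. split; assumption. Qed.

Lemma le_sup (S : A -> Prop) (a : A) : S a -> le a (sup S).
Proof. intro Sa. exact (proj1 (sup_lub A S _) (le_refl A _) a Sa). Qed.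

Lemma top_le_eq (a : A) : le top a -> a = top.
Proof. intro Ha. apply le_antisym; [apply top_max | exact Ha]. Qed.

End CHAFacts.

Section Mixtures.
Variable A : CHA.
Variable V : form A -> A.

Hypothesis V_mem : forall u v : name A,
  V (FMem (Cst u) (Cst v)) =
  sup (fun a => exists i : ndomI v,
           a = meet (nval v i) (V (FEq (Cst (ndom v i)) (Cst u)))).

Hypothesis V_eq : forall u v : name A,
  V (FEq (Cst u) (Cst v)) =
  meet (inf (fun a => exists i : ndomI u,
                a = imp (nval u i) (V (FMem (Cst (ndom u i)) (Cst v)))))
       (inf (fun a => exists i : ndomI v,
                a = imp (nval v i) (V (FMem (Cst (ndom v i)) (Cst u))))).

Lemma le_eq (c : A) (u v : name A) :
  (forall i, le (meet (nval u i) c) (V (FMem (Cst (ndom u i)) (Cst v)))) ->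
  (forall i, le (meet (nval v i) c) (V (FMem (Cst (ndom v i)) (Cst u)))) ->
  le c (V (FEq (Cst u) (Cst v))).
Proof.
  intros Huv Hvu. rewrite V_eq.
  apply le_meet; apply inf_glb; intros a [i ->]; apply imp_adj; auto.
Qed.

Lemma eq_refl_top (u : name A) : V (FEq (Cst u) (Cst u)) = top.
Proof.
  induction u as [I d IH f]. apply top_le_eq.
  assert (Hdom : forall i, le (meet (f i) top) (V (FMem (Cst (d i)) (Cst (Nm I d f))))).
  { intro i. rewrite V_mem, <- (IH i). apply le_sup. exists i. reflexivity. }
  apply le_eq; exact Hdom.
Qed.

Lemma le_mem_dom (v : name A) (i : ndomI v) :
  le (nval v i) (V (FMem (Cst (ndom v i)) (Cst v))).
Proof.
  rewrite V_mem. eapply le_trans; [| apply le_sup; exists i; reflexivity].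
  rewrite eq_refl_top. apply le_meet; [apply le_refl | apply top_max].
Qed.

Definition mixture {J : Type} (b : J -> A) (u : J -> name A) : name A :=
  Nm {j : J & ndomI (u j)}
     (fun p => ndom (u (projT1 p)) (projT2 p))
     (fun p => meet (b (projT1 p)) (nval (u (projT1 p)) (projT2 p))).

Lemma le_eq_mixture {J : Type} (b : J -> A) (u : J -> name A) :
  (forall j k, j <> k -> meet (b j) (b k) = bot) ->
  forall j, le (b j) (V (FEq (Cst (u j)) (Cst (mixture b u)))).
Proof.
  intros Hdisj j. apply le_eq.
  - intro i. eapply le_trans; [| exact (le_mem_dom (mixture b u) (existT _ j i))].
    simpl. apply le_meet; [apply le_meetr | apply le_meetl].
  - intros [k i]. simpl. destruct (classic (k = j)) as [<- | Hkj].
    + eapply le_trans; [| apply le_mem_dom].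
      eapply le_trans; [apply le_meetl | apply le_meetr].
    + eapply le_trans; [| apply bot_min]. rewrite <- (Hdisj k j Hkj).
      apply le_meet; [eapply le_trans; apply le_meetl | apply le_meetr].
Qed.

End Mixtures.

Arguments mixture {A J} b u.

Lemma one_var_sentence_ex {T : Type} (x : nat) (f : form T) :
  one_var x f -> sentence (FEx x f).
Proof. intros Hf n [Hxn Hn]. apply Hxn. symmetry. exact (Hf n Hn). Qed.

Lemma antichain_sig_disjoint (A : CHA) (B : A -> Prop) :
  antichain B -> forall j k : {b : A | B b},
  j <> k -> meet (proj1_sig j) (proj1_sig k) = bot.
Proof.
  intros HB [b Bb] [c Bc] Hne. apply HB; auto. simpl. intros <-.
  apply Hne. f_equal. apply proof_irrelevance.
Qed.

Theorem theorem5p4 (A : CHA) (N : A -> A -> Prop) (V : form A -> A)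
  (HC : C_omega A N) (Href : refinable A) (HV : truth_map A N V)
  (HL : Leibniz A V) (x : nat) (psi : form A) (Hpsi : one_var x psi) :
  valid V (FEx x psi) -> exists u : name A, valid V (subst x u psi).
Proof.
  unfold valid. intro Hex.
  destruct HV as [V_mem [V_eq [_ [_ [_ [_ [V_ex _]]]]]]].
  rewrite (V_ex x psi (one_var_sentence_ex x psi Hpsi)) in Hex.
  destruct (Href (fun a => exists u, a = V (subst x u psi)))
    as [B [HB [HBref HBsup]]].
  destruct (choice (fun (j : {b : A | B b}) u => le (proj1_sig j) (V (subst x u psi))))
    as [u Hu].
  { intros [b Bb]. destruct (HBref b Bb) as [c [[u ->] Hbc]]. exists u. exact Hbc. }
  exists (mixture (@proj1_sig A B) u).
  apply top_le_eq. rewrite <- Hex, <- HBsup. apply sup_lub. intros b Bb.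
  set (j := exist B b Bb).
  eapply le_trans; [| exact (HL x psi Hpsi (u j) _)].
  apply le_meet; [| exact (Hu j)].
  exact (le_eq_mixture A V V_mem V_eq (@proj1_sig A B) u (antichain_sig_disjoint A B HB) j).
Qed.
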